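(* Let $f:X\to Y$ be a homomorphism of complex tori, where $X$ has dimension $g$ and period matrix $(\tau\ \ I_g)$ and $Y$ has dimension $h$ and period matrix $(\sigma\ \ I_h)$ (with $\det\operatorname{Im}\tau\ne0$, $\det\operatorname{Im}\sigma\neq0$). Write $F_X=\mathbb{Q}(\{\tau_{ij}\})$, $F_Y=\mathbb{Q}(\{\sigma_{ij}\})$, $\mathfrak{d}_X=[F_X:\mathbb{Q}]$, $\mathfrak{d}_Y=[F_Y:\mathbb{Q}]$. Then: (1) if $f$ has finite kernel, then $F_X\subseteq F_Y$, in particular $\mathfrak{d}_X\le\mathfrak{d}_Y$; (2) if $f$ is surjective, then $F_Y\subseteq F_X$, in particular $\mathfrak{d}_Y\le\mathfrak{d}_X$; (3) if $f$ is an isogeny, then $F_X=F_Y$ and $\mathfrak{d}_X=\mathfrak{d}_Y$; (4) $F_X=F_{X^\vee}$, where $X^\vee$ is the dual torus. In particular $F_X$ and $\mathfrak{d}_X$ depend only on $X$ (indeed only on its isogeny class), not on the chosen period matrix of the form $(\tau\ \ I_g)$.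
   Context: A complex torus of dimension $g$ with period matrix $\Pi=(\tau\ \ I_g)$ is $X=\mathbb{C}^g/\Lambda$, where $\Lambda$ is the lattice generated by the $2g$ columns of $\Pi$; every complex torus admits such a period matrix with $\det(\operatorname{Im}\tau)\neq0$. For such a period matrix set $F_X=\mathbb{Q}(\{\tau_{ij}\})\subseteq\mathbb{C}$ and $\mathfrak{d}_X=[F_X:\mathbb{Q}]\in\mathbb{N}\cup\{\infty\}$. *)

From HB Require Import structures.
From mathcomp Require Import all_boot all_order all_algebra.
From mathcomp Require Import complex.
From mathcomp Require Import boolp classical_sets reals.
Set Implicit Arguments.
Unset Strict Implicit.
Unset Printing Implicit Defensive.
Import Order.TTheory GRing.Theory Num.Theory.
Local Open Scope ring_scope.
Local Open Scope classical_set_scope.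

Section Tori.
Variable R : realType.
Local Notation C := (R[i]).

Definition normalized_period (g : nat) (tau : 'M[C]_g) : Prop :=
  \det (map_mx (@complex.Im R) tau) != 0.

(* The lattice Lambda_tau spanned by the 2g columns of (tau  I_g):
   v = tau a + b with a, b integer column vectors. *)
Definition in_lattice (g : nat) (tau : 'M[C]_g) (v : 'cV[C]_g) : Prop :=
  exists a b : 'cV[int]_g,
    v = tau *m map_mx (fun z : int => z%:~R) a + map_mx (fun z : int => z%:~R) b.

(* A homomorphism f : X = C^g/Lambda_tau -> Y = C^h/Lambda_sigma is given by its
   analytic representation, a C-linear map A : C^g -> C^h with A(Lambda_tau) in
   Lambda_sigma. *)
Definition torus_hom (g h : nat) (tau : 'M[C]_g) (sigma : 'M[C]_h)
  (A : 'M[C]_(h, g)) : Prop :=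
  forall v, in_lattice tau v -> in_lattice sigma (A *m v).

(* ker f = { v : A v in Lambda_sigma } / Lambda_tau is finite:
   finitely many classes modulo Lambda_tau. *)
Definition finite_kernel (g h : nat) (tau : 'M[C]_g) (sigma : 'M[C]_h)
  (A : 'M[C]_(h, g)) : Prop :=
  exists s : seq 'cV[C]_g, forall v, in_lattice sigma (A *m v) ->
    exists2 w, w \in s & in_lattice tau (v - w).

Definition surjective_hom (g h : nat) (sigma : 'M[C]_h) (A : 'M[C]_(h, g)) : Prop :=
  forall y : 'cV[C]_h, exists x : 'cV[C]_g, in_lattice sigma (A *m x - y).

Definition isogeny (g h : nat) (tau : 'M[C]_g) (sigma : 'M[C]_h)
  (A : 'M[C]_(h, g)) : Prop :=
  surjective_hom sigma A /\ finite_kernel tau sigma A.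

(* We identify the space Omega-bar of
   C-antilinear forms on C^g with C^g via c |-> l_c, l_c(v) = sum_i c_i conj(v_i)
   (a C-linear identification); the dual lattice is
   Lambda-hat = { l : Im l(Lambda) subset Z }. *)
Definition antilin_form (g : nat) (c v : 'cV[C]_g) : C :=
  \sum_(i < g) c i 0 * conjc (v i 0).

Definition in_dual_lattice (g : nat) (tau : 'M[C]_g) (c : 'cV[C]_g) : Prop :=
  forall v, in_lattice tau v -> exists z : int, complex.Im (antilin_form c v) = z%:~R.

(* (tau' I_g) is a normalized period matrix of the dual torus of X = C^g/Lambda_tau:
   there is a C-linear isomorphism M : C^g -> Omega-bar with M(Lambda_tau') = Lambda-hat. *)
Definition dual_period (g : nat) (tau tau' : 'M[C]_g) : Prop :=
  normalized_period tau' /\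
  exists2 M : 'M[C]_g, M \in unitmx &
    forall v, in_lattice tau' v <-> in_dual_lattice tau (M *m v).

Definition is_subfield (K : set C) : Prop :=
  [/\ K 0, K 1, (forall x y, K x -> K y -> K (x - y)),
      (forall x y, K x -> K y -> K (x * y)) & (forall x, K x -> K x^-1)].

Definition gen_field (S : set C) : set C :=
  fun z => forall K, is_subfield K -> S `<=` K -> K z.

Definition period_field (g : nat) (tau : 'M[C]_g) : set C :=
  gen_field (fun z => exists i j, z = tau i j).

(* [K : Q] in N u {oo}: None stands for infinity, Some n for the least n such
   that K is spanned over Q by n of its elements. *)
Definition Qspanned (K : set C) (n : nat) : Prop :=
  exists v : 'I_n -> C, (forall i, K (v i)) /\
    forall z, K z -> exists q : 'I_n -> rat, z = \sum_(i < n) ratr (q i) * v i.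

Definition Qdegree (K : set C) : option nat :=
  if `[< exists n, Qspanned K n >] then
    Some (xget 0%N (fun n => Qspanned K n /\ forall m, Qspanned K m -> (n <= m)%N))
  else None.

Definition period_degree (g : nat) (tau : 'M[C]_g) : option nat :=
  Qdegree (period_field tau).

End Tori.

Definition odeg_le (a b : option nat) : Prop :=
  match a, b with
  | _, None => True
  | None, Some _ => False
  | Some n, Some m => (n <= m)%N
  end.

From HB Require Import structures.
From mathcomp Require Import all_boot all_order all_algebra.
From mathcomp Require Import complex.
From mathcomp Require Import boolp classical_sets reals cardinality ereal lebesgue_measure.
From mathcomp Require Import ring.
Set Implicit Arguments.
Unset Strict Implicit.
Unset Printing Implicit Defensive.
Import Order.TTheory GRing.Theory Num.Theory.
Local Open Scope ring_scope.
Local Open Scope classical_set_scope.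

(** A homomorphism of tori is a complex matrix [A] with [A Λ_τ ⊆ Λ_σ]; on the
   generators this reads [A τ = σ a + c] and [A = σ b + d] with integer matrices
   [a, b, c, d], so [A] has entries in [F_σ].  If the kernel is finite then [A]
   is injective, since a complex line in the kernel cannot be covered by
   countably many lattice translates; a left inverse of [A] over [F_σ] then
   exhibits [τ] over [F_σ].  If [f] is surjective then the rows of [A] are
   independent, and eliminating [A] gives [σ (a - b τ) = d τ - c], where
   [a - b τ] has a right inverse over [F_τ] because
   [(σ - σ̄)(a - b τ) = Ā (τ - τ̄)].  An antilinear form [c] lies in the dual
   lattice iff [(Im τ)^T c ∈ Λ_(τ^T)], so [τ^T] is a period matrix of the dual
   torus and any other one has a lattice isomorphic to [Λ_(τ^T)].  Degrees
   compare because a Q-subspace of the span of [n] numbers is spanned by at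
   most [n] of its own elements. *)

Section MxOverSubfield.
Variables (F : fieldType) (S : divringClosed F).

Definition subfield_of := {x : F | x \in S}.
HB.instance Definition _ := [isSub of subfield_of for (@sval F (fun x => x \in S))].
HB.instance Definition _ := [Choice of subfield_of by <:].
HB.instance Definition _ := [SubChoice_isSubComUnitRing of subfield_of by <:].
HB.instance Definition _ := [SubComUnitRing_isSubIntegralDomain of subfield_of by <:].
HB.instance Definition _ := [SubIntegralDomain_isSubField of subfield_of by <:].

Lemma mxOver_subfield_lift m n (A : 'M[F]_(m, n)) :
  A \is a mxOver S -> exists A' : 'M[subfield_of]_(m, n), A = map_mx val A'.
Proof.
move=> /mxOverP AS; exists (\matrix_(i, j) insubd (0 : subfield_of) (A i j)).
by apply/matrixP => i j; rewrite !mxE insubdK.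
Qed.

Lemma map_mx_val_mxOver m n (A : 'M[subfield_of]_(m, n)) :
  map_mx val A \is a mxOver S.
Proof. by apply/mxOverP => i j; rewrite mxE; apply: valP. Qed.

Lemma mxOver_row_full_linv m n (A : 'M[F]_(m, n)) :
  A \is a mxOver S -> row_full A ->
  exists2 B : 'M[F]_(n, m), B \is a mxOver S & B *m A = 1%:M.
Proof.
move=> /mxOver_subfield_lift [A' ->]; rewrite /row_full mxrank_map => /row_fullP [B BA].
by exists (map_mx val B); rewrite ?map_mx_val_mxOver // -map_mxM BA map_mx1.
Qed.

Lemma mxOver_row_free_rinv m n (A : 'M[F]_(m, n)) :
  A \is a mxOver S -> row_free A ->
  exists2 B : 'M[F]_(n, m), B \is a mxOver S & A *m B = 1%:M.
Proof.
move=> /mxOver_subfield_lift [A' ->]; rewrite /row_free mxrank_map => /row_freeP [B AB].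
by exists (map_mx val B); rewrite ?map_mx_val_mxOver // -map_mxM AB map_mx1.
Qed.

End MxOverSubfield.

Lemma mxOver_trmx (T : Type) (S : {pred T}) m n (A : 'M[T]_(m, n)) :
  A \is a mxOver S -> A^T \is a mxOver S.
Proof. by move=> /mxOverP AS; apply/mxOverP => i j; rewrite mxE. Qed.

Lemma mxOver_intmx (T : pzRingType) (S : subringClosed T) m n (a : 'M[int]_(m, n)) :
  map_mx (fun z : int => z%:~R) a \is a mxOver S.
Proof. by apply/mxOverP => i j; rewrite mxE rpred_int. Qed.

Section PeriodField.
Variable R : realType.
Local Notation C := (R[i]).

Lemma gen_field_subfield (E : set C) : is_subfield (gen_field E).
Proof.
split=> [K [] | K [] | x y xE yE K KF EK | x y xE yE K KF EK | x xE K KF EK] //;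
  have [_ _ KB KM KV] := KF; [apply: KB | apply: KM | apply: KV];
  by [apply: xE | apply: yE].
Qed.

Definition period_field_pred g (tau : 'M[C]_g) : pred C :=
  fun z => `[< period_field tau z >].

Lemma period_fieldP g (tau : 'M[C]_g) z :
  reflect (period_field tau z) (z \in period_field_pred tau).
Proof. exact: asboolP. Qed.

Lemma period_field_pred_divring_closed g (tau : 'M[C]_g) :
  divring_closed (period_field_pred tau).
Proof.
have [_ K1 KB KM KV] := gen_field_subfield (fun z => exists i j, z = tau i j).
split=> [|x y /period_fieldP xK /period_fieldP yK|x y /period_fieldP xK /period_fieldP yK];
  apply/period_fieldP; [exact: K1 | exact: KB | exact: KM xK (KV _ yK)].
Qed.

HB.instance Definition _ g (tau : 'M[C]_g) :=
  GRing.isDivringClosed.Build C (period_field_pred tau) (period_field_pred_divring_closed tau).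

Lemma period_mxOver g (tau : 'M[C]_g) : tau \is a mxOver (period_field_pred tau).
Proof. by apply/mxOverP => i j; apply/period_fieldP => K _; apply; exists i, j. Qed.

Lemma period_field_subset g h (tau : 'M[C]_g) (sigma : 'M[C]_h) :
  tau \is a mxOver (period_field_pred sigma) -> period_field tau `<=` period_field sigma.
Proof.
move=> /mxOverP tauK z tau_z; apply: tau_z; first exact: gen_field_subfield.
by move=> _ [i [j ->]]; apply/period_fieldP.
Qed.

Lemma period_field_trmx g (tau : 'M[C]_g) : period_field tau^T = period_field tau.
Proof.
apply/seteqP; split; apply: period_field_subset.
  exact/mxOver_trmx/period_mxOver.
by rewrite -[X in X \is a _]trmxK; apply/mxOver_trmx/period_mxOver.
Qed.

End PeriodField.

Section QDegree.
Variable R : realType.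
Local Notation C := (R[i]).

Definition Qspan n (v : 'I_n -> C) : set C :=
  [set z | exists q : 'I_n -> rat, z = \sum_(i < n) ratr (q i) * v i].

Definition Qsubspace (P : set C) :=
  forall x y c, P x -> P y -> P (x - ratr c * y).

Lemma Qspan_comb n (v : 'I_n -> C) p q c :
  \sum_i ratr (p i) * v i - ratr c * \sum_i ratr (q i) * v i =
  \sum_i ratr (p i - c * q i) * v i.
Proof.
rewrite mulr_sumr -sumrB; apply: eq_bigr => i _.
by rewrite rmorphB rmorphM /= mulrBl mulrA.
Qed.

Lemma Qsubspace_Qspan n (v : 'I_n -> C) : Qsubspace (Qspan v).
Proof. by move=> _ _ c [p ->] [q ->]; exists (fun i => p i - c * q i); rewrite Qspan_comb. Qed.

Lemma Qspan_behead n (v : 'I_n.+1 -> C) q : q ord0 = 0 ->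
  Qspan (v \o lift ord0) (\sum_i ratr (q i) * v i).
Proof.
by move=> q0; exists (q \o lift ord0); rewrite big_ord_recl q0 rmorph0 mul0r add0r.
Qed.

Definition Qcons n (x : C) (w : 'I_n -> C) (i : 'I_n.+1) : C :=
  if unlift ord0 i is Some j then w j else x.

Lemma Qspan_cons n x (w : 'I_n -> C) y c :
  Qspan w y -> Qspan (Qcons x w) (y + ratr c * x).
Proof.
move=> [q ->]; exists (fun i => if unlift ord0 i is Some j then q j else c).
rewrite big_ord_recl /Qcons unlift_none addrC; congr (_ + _).
by apply: eq_bigr => i _; rewrite liftK.
Qed.

Lemma Qsubspace_spanned n (v : 'I_n -> C) (P : set C) :
  Qsubspace P -> P `<=` Qspan v -> exists2 m, (m <= n)%N & Qspanned P m.
Proof.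
elim: n v P => [|n IHn] v P Psub Pv.
  by exists 0%N => //; exists v; split => [[]|].
pose P' := P `&` Qspan (v \o lift ord0).
have P'sub : Qsubspace P'.
  by move=> x y c [Px x'] [Py y']; split; [apply: Psub | apply: Qsubspace_Qspan].
have [m le_mn [w [P'w P'_w]]] := IHn _ P' P'sub (fun _ => @proj2 _ _).
have [PP'|/existsNP [x /not_implyP [Px P'x]]] := pselect (P `<=` P').
  exists m; first exact: leqW.
  by exists w; split => [i|z /PP'/P'_w //]; case: (P'w i).
have [q xE] := Pv x Px.
have q0 : q ord0 != 0.
  apply: contra_notN P'x => /eqP q0; split => //.
  by rewrite xE; apply: Qspan_behead.
exists m.+1 => //; exists (Qcons x w); split => [i | z Pz].
  by rewrite /Qcons; case: unlift => [j|] //; case: (P'w j).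
have [p zE] := Pv z Pz; pose c := p ord0 / q ord0.
have P'z : P' (z - ratr c * x).
  split; first exact: Psub.
  by rewrite zE xE Qspan_comb; apply: Qspan_behead; rewrite /c mulfVK ?subrr.
by have := Qspan_cons x c (P'_w _ P'z); rewrite subrK.
Qed.

Lemma QdegreeP (K : set C) :
  (Qdegree K = None /\ forall n, ~ Qspanned K n) \/
  exists n, [/\ Qdegree K = Some n, Qspanned K n &
                forall m, Qspanned K m -> (n <= m)%N].
Proof.
rewrite /Qdegree; case: asboolP => [[n Kn]|nK]; last first.
  by left; split => // n Kn; apply: nK; exists n.
right; have ex_min : exists n, Qspanned K n /\ forall m, Qspanned K m -> (n <= m)%N.
  have Kex : exists n, `[< Qspanned K n >] by exists n; apply/asboolP.
  exists (ex_minn Kex); case: ex_minnP => k /asboolP Kk kmin.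
  by split => // m /asboolP; apply: kmin.
have [Kk kmin] := xgetPex 0%N ex_min.
by eexists; split; [reflexivity | exact: Kk | exact: kmin].
Qed.

Lemma Qdegree_le (K1 K2 : set C) :
  Qsubspace K1 -> K1 `<=` K2 -> odeg_le (Qdegree K1) (Qdegree K2).
Proof.
move=> K1sub K12.
have [[-> _]|[n2 [-> [v [_ K2v]] _]]] := QdegreeP K2; first by case: Qdegree.
have [m le_mn K1m] := Qsubspace_spanned K1sub (subset_trans K12 K2v).
have [[_ /(_ m)]|[n1 [-> _ /(_ m K1m) le_nm]]] := QdegreeP K1; first by [].
exact: leq_trans le_mn.
Qed.

Lemma period_degree_le g h (tau : 'M[C]_g) (sigma : 'M[C]_h) :
  period_field tau `<=` period_field sigma ->
  odeg_le (period_degree tau) (period_degree sigma).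
Proof.
apply: Qdegree_le => x y c /period_fieldP xK /period_fieldP yK.
by apply/period_fieldP; rewrite rpredB // rpredM //; apply: rpred_rat.
Qed.

End QDegree.

Section Lattice.
Variable R : realType.
Local Notation C := (R[i]).
Local Notation zmx := (map_mx (fun z : int => (z%:~R : C))).

Lemma zmx_delta n (j : 'I_n) : zmx (delta_mx j 0 : 'cV_n) = delta_mx j 0.
Proof. by apply/matrixP => i k; rewrite !mxE; case: (_ && _). Qed.

Lemma in_lattice0 g (tau : 'M[C]_g) : in_lattice tau 0.
Proof. by exists 0, 0; rewrite !map_mx0 mulmx0 addr0. Qed.

Lemma in_lattice_period_col g (tau : 'M[C]_g) j : in_lattice tau (tau *m delta_mx j 0).
Proof. by exists (delta_mx j 0), 0; rewrite map_mx0 addr0 zmx_delta. Qed.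

Lemma in_lattice_unit_col g (tau : 'M[C]_g) j : in_lattice tau (delta_mx j 0).
Proof. by exists 0, (delta_mx j 0); rewrite map_mx0 mulmx0 add0r zmx_delta. Qed.

Lemma in_lattice_cols g h (sigma : 'M[C]_h) (X : 'M[C]_(h, g)) :
  (forall j, in_lattice sigma (X *m delta_mx j 0)) ->
  exists a c : 'M[int]_(h, g), X = sigma *m zmx a + zmx c.
Proof.
move=> Xsigma.
have Xac j : exists ac : 'cV[int]_h * 'cV[int]_h,
    X *m delta_mx j 0 = sigma *m zmx ac.1 + zmx ac.2.
  by have [a [c ?]] := Xsigma j; exists (a, c).
have [ac acE] := choice Xac.
exists (\matrix_(i, j) (ac j).1 i 0), (\matrix_(i, j) (ac j).2 i 0).
apply/matrixP => i j; have := congr1 (fun v : 'cV[C]_h => v i 0) (acE j).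
rewrite -colE !mxE => ->; congr (_ + _); by apply: eq_bigr => k _; rewrite !mxE.
Qed.

Lemma torus_homE g h (tau : 'M[C]_g) (sigma : 'M[C]_h) (A : 'M[C]_(h, g)) :
  torus_hom tau sigma A ->
  exists a b c d : 'M[int]_(h, g),
    A *m tau = sigma *m zmx a + zmx c /\ A = sigma *m zmx b + zmx d.
Proof.
move=> A_hom.
have [a [c Atau]] : exists a c, A *m tau = sigma *m zmx a + zmx c.
  by apply: in_lattice_cols => j; rewrite -mulmxA; apply/A_hom/in_lattice_period_col.
have [b [d AE]] : exists b d, A = sigma *m zmx b + zmx d.
  by apply: in_lattice_cols => j; apply/A_hom/in_lattice_unit_col.
by exists a, b, c, d.
Qed.

End Lattice.

Section Kernel.
Variable R : realType.
Local Notation C := (R[i]).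
Local Notation zmx := (map_mx (fun z : int => (z%:~R : C))).

Lemma real_uncountable : ~ countable [set: R].
Proof.
move=> cR; have := @countable_lebesgue_measure0 R `[0%R, 1%R]
  (sub_countable (subset_card_le (@subsetT _ _)) cR).
by rewrite lebesgue_measure_itv /= lte_fin ltr01 /= oppr0 adde0 => -[]; apply/eqP/oner_neq0.
Qed.

Lemma countable_not_onto_complex (T : countType) (f : T -> C) :
  ~ (forall z, exists t, f t = z).
Proof.
move=> f_onto; apply: real_uncountable.
have : [set: R] `<=` (fun t => complex.Re (f t)) @` setT.
  by move=> r _; have [t ftr] := f_onto r%:C%C; exists t; rewrite ?ftr.
move/subset_card_le/card_le_trans; apply.
exact: card_le_trans (card_image_le _ _) (countableP _).
Qed.

Lemma finite_kernel_row_full g h (tau : 'M[C]_g) (sigma : 'M[C]_h) (A : 'M[C]_(h, g)) :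
  finite_kernel tau sigma A -> row_full A.
Proof.
move=> [s kerA]; rewrite /row_full -mxrank_tr; apply: inj_row_free => v vA.
apply/eqP/negPn/negP => /rV0Pn [k vk].
have Av : A *m v^T = 0 by rewrite -[A]trmxK -trmx_mul vA trmx0.
pose f (p : nat * ('cV[int]_g * 'cV[int]_g)) :=
  (nth 0 s p.1 + (tau *m zmx p.2.1 + zmx p.2.2)) k 0 / v 0 k.
apply: (@countable_not_onto_complex _ f) => z.
have [|w ws [a [b wE]]] := kerA (z *: v^T).
  by rewrite -scalemxAr Av scaler0; apply: in_lattice0.
by exists (index w s, (a, b)); rewrite /f /= nth_index // -wE addrC subrK !mxE mulfK.
Qed.

Lemma surjective_hom_row_free g h (sigma : 'M[C]_h) (A : 'M[C]_(h, g)) :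
  surjective_hom sigma A -> row_free A.
Proof.
move=> A_onto; apply: inj_row_free => x xA.
apply/eqP/negPn/negP => /rV0Pn [k xk].
pose f (p : 'cV[int]_h * 'cV[int]_h) := - (x *m (sigma *m zmx p.1 + zmx p.2)) 0 0 / x 0 k.
apply: (@countable_not_onto_complex _ f) => z.
have [v [a [b vE]]] := A_onto (z *: delta_mx k 0).
exists (a, b); rewrite /f /= -vE mulmxBr mulmxA xA mul0mx sub0r -scalemxAr.
by rewrite mxE opprK mxE -colE mxE mulfK.
Qed.

End Kernel.

Section ImaginaryPart.
Variable R : realType.
Local Notation C := (R[i]).
Local Notation zmx := (map_mx (fun z : int => (z%:~R : C))).
Local Notation mxconj := (map_mx (@conjc R)).

Definition Immx m n (A : 'M[C]_(m, n)) : 'M[C]_(m, n) :=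
  map_mx (real_complex R) (map_mx (@complex.Im R) A).

Lemma mxconj_int m n (a : 'M[int]_(m, n)) : mxconj (zmx a) = zmx a.
Proof. by apply/matrixP => i j; rewrite !mxE rmorph_int. Qed.

Lemma subr_mxconj m n (A : 'M[C]_(m, n)) : A - mxconj A = (2 * 'i%C) *: Immx A.
Proof. by apply/matrixP => i j; rewrite !mxE subcJ mulrAC. Qed.

Lemma Immx_unit g (tau : 'M[C]_g) : normalized_period tau -> Immx tau \in unitmx.
Proof. by rewrite unitmxE det_map_mx unitfE eq_complex /= eqxx andbT. Qed.

Lemma subr_mxconj_unit g (tau : 'M[C]_g) :
  normalized_period tau -> tau - mxconj tau \in unitmx.
Proof.
move=> /Immx_unit tauU; rewrite subr_mxconj unitmxZ // unitfE mulf_neq0 ?pnatr_eq0 //.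
by rewrite eq_complex /= oner_eq0 andbF.
Qed.

Lemma Im_mul_conj (t c : C) :
  (complex.Im t)%:C%C * c = t * (complex.Im c)%:C%C - (complex.Im (t^*%C * c))%:C%C.
Proof.
case: t c => [a b] [x y]; apply/eqP; rewrite eq_complex /=.
by apply/andP; split; apply/eqP; ring.
Qed.

Lemma Immx_trmx_mul g (tau : 'M[C]_g) (c : 'cV[C]_g) :
  (Immx tau)^T *m c = tau^T *m Immx c - Immx ((mxconj tau)^T *m c).
Proof.
apply/matrixP => j k; rewrite !mxE raddf_sum /= rmorph_sum /= -sumrB.
by apply: eq_bigr => i _; rewrite !mxE Im_mul_conj.
Qed.

Lemma Im_mul_int (x : C) (z : int) :
  (complex.Im (x * z%:~R))%:C%C = (complex.Im x)%:C%C * z%:~R.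
Proof. by case: x => a b; rewrite -(rmorph_int (real_complex R)); simpc. Qed.

Lemma Immx_mul_int m n p (A : 'M[C]_(m, n)) (a : 'M[int]_(n, p)) :
  Immx (A *m zmx a) = Immx A *m zmx a.
Proof.
apply/matrixP => i j; rewrite !mxE raddf_sum /= rmorph_sum /=.
by apply: eq_bigr => k _; rewrite !mxE Im_mul_int.
Qed.

Lemma mxconj_Immx m n (A : 'M[C]_(m, n)) : mxconj (Immx A) = Immx A.
Proof. by apply/matrixP => i j; rewrite !mxE conjc_real. Qed.

Lemma ImmxD m n (A B : 'M[C]_(m, n)) : Immx (A + B) = Immx A + Immx B.
Proof. by rewrite /Immx !map_mxD. Qed.

Lemma Immx_trmx m n (A : 'M[C]_(m, n)) : Immx A^T = (Immx A)^T.
Proof. by apply/matrixP => i j; rewrite !mxE. Qed.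

Lemma Immx_int_entries g (u : 'cV[C]_g) :
  (forall j, exists z : int, complex.Im (u j 0) = z%:~R) -> exists m, Immx u = zmx m.
Proof.
move=> /choice [f fE]; exists (\col_j f j).
by apply/matrixP => i k; rewrite ord1 !mxE fE rmorph_int.
Qed.

End ImaginaryPart.

Section PeriodFieldInclusion.
Variable R : realType.
Local Notation C := (R[i]).
Local Notation zmx := (map_mx (fun z : int => (z%:~R : C))).
Local Notation mxconj := (map_mx (@conjc R)).

Lemma period_field_sub_of_row_full g h (tau : 'M[C]_g) (sigma : 'M[C]_h) A :
  torus_hom tau sigma A -> row_full A -> period_field tau `<=` period_field sigma.
Proof.
move=> /torus_homE [a [b [c [d [Atau AE]]]]] A_full.
have sigmaK := period_mxOver sigma.
have AK : A \is a mxOver (period_field_pred sigma).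
  by rewrite AE rpredD ?mxOverM ?mxOver_intmx.
have [B BK BA] := mxOver_row_full_linv AK A_full.
have -> : tau = B *m (A *m tau) by rewrite mulmxA BA mul1mx.
by apply: period_field_subset; rewrite Atau mxOverM // rpredD ?mxOverM ?mxOver_intmx.
Qed.

Lemma period_field_sub_of_row_free g h (tau : 'M[C]_g) (sigma : 'M[C]_h) A :
  normalized_period tau -> normalized_period sigma ->
  torus_hom tau sigma A -> row_free A -> period_field sigma `<=` period_field tau.
Proof.
move=> /subr_mxconj_unit tauU /subr_mxconj_unit sigmaU.
move=> /torus_homE [a [b [c [d [Atau AE]]]]] A_free.
pose N := zmx a - zmx b *m tau.
have sigmaN : sigma *m N = zmx d *m tau - zmx c.
  rewrite mulmxBr mulmxA -[sigma *m zmx a](addrK (zmx c)) -Atau.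
  by rewrite -[sigma *m zmx b](addrK (zmx d)) -AE mulmxBl opprB addrC !addrA subrK.
have Im_sigmaN : (sigma - mxconj sigma) *m N = mxconj A *m (tau - mxconj tau).
  have Im_A : A - mxconj A = (sigma - mxconj sigma) *m zmx b.
    by rewrite AE map_mxD map_mxM !mxconj_int mulmxBl opprD addrACA subrr addr0.
  have Im_Atau : A *m tau - mxconj A *m mxconj tau = (sigma - mxconj sigma) *m zmx a.
    by rewrite -map_mxM Atau map_mxD map_mxM !mxconj_int mulmxBl opprD addrACA subrr addr0.
  by rewrite mulmxBr -Im_Atau mulmxA -Im_A mulmxBl mulmxBr opprB addrC addrA subrK.
have N_free : row_free N.
  have -> : N = invmx (sigma - mxconj sigma) *m (mxconj A *m (tau - mxconj tau)).
    by rewrite -Im_sigmaN mulKmx.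
  rewrite /row_free mxrankMfree ?mxrank_unit ?unitmx_inv //.
  by rewrite /row_free mxrankMfree ?row_free_unit // mxrank_map.
have tauK := period_mxOver tau.
have [B BK NB] : exists2 B, B \is a mxOver (period_field_pred tau) & N *m B = 1%:M.
  by apply: mxOver_row_free_rinv N_free; rewrite rpredB ?mxOverM ?mxOver_intmx.
have -> : sigma = (zmx d *m tau - zmx c) *m B by rewrite -sigmaN -mulmxA NB mulmx1.
by apply: period_field_subset; rewrite mxOverM // rpredB ?mxOverM ?mxOver_intmx.
Qed.

Lemma period_field_lattice_iso g (tau tau' : 'M[C]_g) (Q : 'M[C]_g) :
  Q \in unitmx -> (forall v, in_lattice tau v <-> in_lattice tau' (Q *m v)) ->
  period_field tau = period_field tau'.
Proof.
move=> QU Qlattice; apply/seteqP; split.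
  by apply: (@period_field_sub_of_row_full _ _ _ _ Q); rewrite ?row_full_unit // => v /Qlattice.
apply: (@period_field_sub_of_row_full _ _ _ _ (invmx Q)); last by rewrite row_full_unit unitmx_inv.
by move=> v lv; apply/Qlattice; rewrite mulKVmx.
Qed.

End PeriodFieldInclusion.

Section DualTorus.
Variable R : realType.
Local Notation C := (R[i]).
Local Notation zmx := (map_mx (fun z : int => (z%:~R : C))).
Local Notation mxconj := (map_mx (@conjc R)).

Lemma antilin_formE g (c v : 'cV[C]_g) : antilin_form c v = (c^T *m mxconj v) 0 0.
Proof. by rewrite /antilin_form !mxE; apply: eq_bigr => i _; rewrite !mxE. Qed.

Lemma antilin_form_col g (c : 'cV[C]_g) (A : 'M[C]_g) j :
  antilin_form c (A *m delta_mx j 0) = ((mxconj A)^T *m c) j 0.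
Proof. by rewrite -colE /antilin_form !mxE; apply: eq_bigr => i _; rewrite !mxE mulrC. Qed.

Lemma in_dual_latticeE g (tau : 'M[C]_g) (c : 'cV[C]_g) :
  in_dual_lattice tau c <->
  (exists m, Immx c = zmx m) /\ (exists n, Immx ((mxconj tau)^T *m c) = zmx n).
Proof.
split=> [c_dual | [[m cm] [n qn]] _ [a [b ->]]].
  split; apply: Immx_int_entries => j.
    have [z zE] := c_dual _ (in_lattice_unit_col tau j).
    by exists z; rewrite -zE -[delta_mx j 0]mul1mx antilin_form_col map_mx1 trmx1 mul1mx.
  have [z zE] := c_dual _ (in_lattice_period_col tau j).
  by exists z; rewrite -zE antilin_form_col.
exists ((n^T *m a + m^T *m b) 0 0); apply: complexI; rewrite rmorph_int.
have -> : (complex.Im (antilin_form c (tau *m zmx a + zmx b)))%:C%C =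
    Immx (((mxconj tau)^T *m c)^T *m zmx a + c^T *m zmx b) 0 0.
  by rewrite antilin_formE map_mxD map_mxM !mxconj_int mulmxDr trmx_mul trmxK mulmxA !mxE.
by rewrite ImmxD !Immx_mul_int !Immx_trmx qn cm !map_trmx -!map_mxM -map_mxD mxE.
Qed.

Lemma in_dual_lattice_trmx g (tau : 'M[C]_g) (c : 'cV[C]_g) :
  normalized_period tau ->
  in_dual_lattice tau c <-> in_lattice tau^T ((Immx tau)^T *m c).
Proof.
move=> /subr_mxconj_unit; rewrite -unitmx_tr => tauU; rewrite in_dual_latticeE Immx_trmx_mul.
set q := (mxconj tau)^T *m c.
split=> [[[m cm] [n qn]] | [m [n cE]]].
  by exists m, (- n); rewrite cm qn map_mxN.
have tauY : tau^T *m (Immx c - zmx m) = Immx q + zmx n.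
  rewrite mulmxBr; move/eqP: cE; rewrite subr_eq => /eqP ->.
  by rewrite addrAC [X in X - _]addrC addrK addrC.
have Y0 : Immx c - zmx m = 0.
  have conj_tauY : (mxconj tau)^T *m (Immx c - zmx m) = Immx q + zmx n.
    move: (congr1 (map_mx (@conjc R)) tauY).
    by rewrite map_mxM -map_trmx map_mxB map_mxD !mxconj_Immx !mxconj_int.
  by rewrite -(mulKmx tauU (Immx c - zmx m)) raddfB mulmxBl /= tauY conj_tauY subrr mulmx0.
split; first by exists m; apply/eqP; rewrite -subr_eq0 Y0.
exists (- n); apply/eqP; rewrite map_mxN -subr_eq0 opprK.
by rewrite -tauY Y0 mulmx0.
Qed.

End DualTorus.

Theorem proposition2p2 (R : realType) (g h : nat)
    (tau : 'M[R[i]]_g) (sigma : 'M[R[i]]_h) :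
  normalized_period tau -> normalized_period sigma ->
  (forall A : 'M[R[i]]_(h, g), torus_hom tau sigma A ->
    [/\ (finite_kernel tau sigma A ->
           period_field tau `<=` period_field sigma /\
           odeg_le (period_degree tau) (period_degree sigma)),
        (surjective_hom sigma A ->
           period_field sigma `<=` period_field tau /\
           odeg_le (period_degree sigma) (period_degree tau)) &
        (isogeny tau sigma A ->
           period_field tau = period_field sigma /\
           period_degree tau = period_degree sigma)]) /\
  ((exists tau' : 'M[R[i]]_g, dual_period tau tau') /\
   (forall tau' : 'M[R[i]]_g, dual_period tau tau' ->
      period_field tau = period_field tau')).
Proof.
move=> tau_n sigma_n; split.
  move=> A A_hom.
  have tau_sub : finite_kernel tau sigma A -> period_field tau `<=` period_field sigma.
    by move/finite_kernel_row_full; apply: period_field_sub_of_row_full.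
  have sigma_sub : surjective_hom sigma A -> period_field sigma `<=` period_field tau.
    by move/surjective_hom_row_free; apply: period_field_sub_of_row_free.
  split=> [/tau_sub sub | /sigma_sub sub | [/sigma_sub sub_tau /tau_sub sub_sigma]].
  - by split=> //; apply: period_degree_le.
  - by split=> //; apply: period_degree_le.
  - have eqF : period_field tau = period_field sigma by apply/seteqP.
    by rewrite /period_degree eqF.
have ImU : (Immx tau)^T \in unitmx by rewrite unitmx_tr Immx_unit.
split.
  exists tau^T; split; first by rewrite /normalized_period -map_trmx det_tr.
  exists (invmx (Immx tau)^T); first by rewrite unitmx_inv.
  by move=> v; rewrite in_dual_lattice_trmx // mulKVmx.
move=> tau' [_ [M MU M_dual]]; rewrite -period_field_trmx.
apply/esym/(@period_field_lattice_iso _ _ _ _ ((Immx tau)^T *m M)).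
  by rewrite unitmx_mul MU ImU.
by move=> v; rewrite M_dual in_dual_lattice_trmx // mulmxA.
Qed.
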